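(* Let $\eta_0,\eta_1,\dots$, $\mathbf{I}^\Omega$ and $\boldsymbol{\eta}^\Omega$ be as below. There exists a closed λ-term $\mathsf{Eq}$ such that for all $n\in\mathbb{N}$: $\mathsf{Eq}\,\underline{n}\,\mathbf{I}^\Omega=_\mathcal{B}\mathtt{I}$ and $\mathsf{Eq}\,\underline{n}\,\boldsymbol{\eta}^\Omega=_\mathcal{B}\eta_n$.
   Context: $\mathtt{I}=\lambda x.x$, $\Omega=(\lambda x.xx)(\lambda x.xx)$, $\underline n=\lambda fz.f^n(z)$ the Church numeral, $[M_1,\dots,M_n]=\lambda z.zM_1\cdots M_n$ ($z$ fresh), and for an effective enumeration $(M_n)_n$ (i.e. some closed $F$ has $F\underline n=_\beta M_n$) the stream $[M_n]_{n\in\mathbb{N}}$ is a λ-term with $[M_n]_{n\in\mathbb{N}}=_\beta[M_0,[M_{n+1}]_{n\in\mathbb{N}}]$. $\eta_0,\eta_1,\dots$ is an effective enumeration of closed λ-terms with $\eta_i\twoheadrightarrow_{\beta\eta}\mathtt{I}$ (finite η-expansions of the identity). $\mathbf{I}^\Omega$, $\boldsymbol{\eta}^\Omega$ are closed terms with $\mathbf{I}^\Omega yx=_\beta[y\Omega^{\sim n}x]_{n\in\mathbb{N}}$ and $\boldsymbol{\eta}^\Omega yx=_\beta[y\Omega^{\sim n}(\eta_nx)]_{n\in\mathbb{N}}$, where $y\Omega^{\sim n}$ is $y$ applied to $n$ copies of $\Omega$. $M=_\mathcal{B}N$ iff $BT(M)=BT(N)$. *)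

From Stdlib Require Import Arith List Relations.
Import ListNotations.

Inductive term : Type :=
| Var : nat -> term
| App : term -> term -> term
| Lam : term -> term.

Fixpoint lift (k c : nat) (t : term) : term :=
  match t with
  | Var n => if c <=? n then Var (n + k) else Var n
  | App t1 t2 => App (lift k c t1) (lift k c t2)
  | Lam t1 => Lam (lift k (S c) t1)
  end.

Fixpoint subst (s : term) (c : nat) (t : term) : term :=
  match t with
  | Var n => if n =? c then lift c 0 s
             else if c <? n then Var (n - 1) else Var n
  | App t1 t2 => App (subst s c t1) (subst s c t2)
  | Lam t1 => Lam (subst s (S c) t1)
  end.

Inductive beta : term -> term -> Prop :=
| beta_redex : forall t s, beta (App (Lam t) s) (subst s 0 t)
| beta_appl : forall t t' s, beta t t' -> beta (App t s) (App t' s)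
| beta_appr : forall t s s', beta s s' -> beta (App t s) (App t s')
| beta_lam : forall t t', beta t t' -> beta (Lam t) (Lam t').

Inductive betaeta : term -> term -> Prop :=
| be_redex : forall t s, betaeta (App (Lam t) s) (subst s 0 t)
| be_eta : forall t, betaeta (Lam (App (lift 1 0 t) (Var 0))) t
| be_appl : forall t t' s, betaeta t t' -> betaeta (App t s) (App t' s)
| be_appr : forall t s s', betaeta s s' -> betaeta (App t s) (App t s')
| be_lam : forall t t', betaeta t t' -> betaeta (Lam t) (Lam t').

Definition beta_red := clos_refl_trans term beta.
Definition betaeta_red := clos_refl_trans term betaeta.
Definition beta_conv := clos_refl_sym_trans term beta.

Fixpoint closed_at (k : nat) (t : term) : Prop :=
  match t with
  | Var n => n < k
  | App t1 t2 => closed_at k t1 /\ closed_at k t2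
  | Lam t1 => closed_at (S k) t1
  end.
Definition closed (t : term) : Prop := closed_at 0 t.

Definition apps (h : term) (args : list term) : term := fold_left App args h.
Fixpoint lams (n : nat) (t : term) : term :=
  match n with 0 => t | S m => Lam (lams m t) end.

Definition has_hnf (M : term) : Prop :=
  exists n j args, beta_red M (lams n (apps (Var j) args)).

CoInductive bt_eq : term -> term -> Prop :=
| bt_unsolv : forall M N, ~ has_hnf M -> ~ has_hnf N -> bt_eq M N
| bt_hnf : forall M N n j Ms Ns,
    beta_red M (lams n (apps (Var j) Ms)) ->
    beta_red N (lams n (apps (Var j) Ns)) ->
    length Ms = length Ns ->
    (forall i, i < length Ms -> bt_eq (nth i Ms (Var 0)) (nth i Ns (Var 0))) ->
    bt_eq M N.

Definition I : term := Lam (Var 0).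
Definition omega_small : term := Lam (App (Var 0) (Var 0)).
Definition Omega : term := App omega_small omega_small.

Definition church (n : nat) : term :=
  Lam (Lam (Nat.iter n (fun t => App (Var 1) t) (Var 0))).

(* [M, S] = \z. z M S  (z fresh) *)
Definition pair_t (M S : term) : term :=
  Lam (App (App (Var 0) (lift 1 0 M)) (lift 1 0 S)).

Definition effective (M : nat -> term) : Prop :=
  exists F, closed F /\ forall n, beta_conv (App F (church n)) (M n).

Definition is_stream (M : nat -> term) (S : term) : Prop :=
  exists s : nat -> term, s 0 = S /\
    forall k, beta_conv (s k) (pair_t (M k) (s (Datatypes.S k))).

(* the two free variables y, x used in the defining equations *)
Definition vy : term := Var 0.
Definition vx : term := Var 1.

(* The n-th element of a stream S is read off as n T S K, where T = λu. u (λab.b) drops the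
   head and K = λab.a takes it. Evaluating the n-th element y Ω^n x of I^Ω (resp. y Ω^n (η_n x)
   of η^Ω) at y := n K I, which discards its first n arguments and then behaves as I, and at
   x := z gives Eq n I^Ω =β λz.z and Eq n η^Ω =β λz. η_n z. Finally λz. M z and M have the same
   Böhm tree for closed M: if M has a head normal form it starts with an abstraction, so
   λz. M z =β M, and if not, λz. M z is unsolvable as well. *)
From Stdlib Require Import Arith List Relations Lia Classical.
Import ListNotations.

Ltac index_cases := repeat (cbn [lift subst] in *; match goal with
 | |- context [?a <=? ?b] => destruct (Nat.leb_spec a b)
 | |- context [?a =? ?b] => destruct (Nat.eqb_spec a b)
 | |- context [?a <? ?b] => destruct (Nat.ltb_spec a b)
 end); try (exfalso; lia); try reflexivity; try (f_equal; lia).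

Lemma lift_0 t c : lift 0 c t = t.
Proof. revert c; induction t; intros; simpl; f_equal; auto; index_cases. Qed.

Lemma lift_lift_comm t j k c d : c <= d ->
  lift k c (lift j d t) = lift j (d + k) (lift k c t).
Proof.
  revert j k c d; induction t; intros; cbn [lift]; [index_cases | f_equal; auto |].
  f_equal; rewrite IHt by lia; reflexivity.
Qed.

Lemma lift_lift_fuse t j k c d : c <= d <= c + k ->
  lift j d (lift k c t) = lift (j + k) c t.
Proof.
  revert j k c d; induction t; intros; cbn [lift]; [index_cases | f_equal; auto |].
  f_equal; apply IHt; lia.
Qed.

Lemma lift_subst_lo t s k c d : d <= c ->
  lift k c (subst s d t) = subst (lift k (c - d) s) d (lift k (S c) t).
Proof.
  revert s k c d; induction t; intros; cbn [lift subst]; [| f_equal; auto |].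
  - index_cases. subst n. rewrite (lift_lift_comm s k d 0 (c - d)) by lia. f_equal; lia.
  - f_equal; rewrite IHt by lia; reflexivity.
Qed.

Lemma lift_subst_hi t s k c d : c <= d ->
  lift k c (subst s d t) = subst s (d + k) (lift k c t).
Proof.
  revert s k c d; induction t; intros; cbn [lift subst]; [| f_equal; auto |].
  - index_cases. subst n. rewrite lift_lift_fuse by lia. f_equal; lia.
  - f_equal; rewrite IHt by lia; reflexivity.
Qed.

Lemma subst_lift t s k c d : c <= d <= c + k ->
  subst s d (lift (S k) c t) = lift k c t.
Proof.
  revert s k c d; induction t; intros; cbn [lift subst]; [index_cases | f_equal; auto |].
  f_equal; apply IHt; lia.
Qed.

Lemma subst_subst u s t c d : d <= c ->
  subst s c (subst t d u) = subst (subst s (c - d) t) d (subst s (S c) u).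
Proof.
  revert s t c d; induction u; intros; cbn [lift subst]; [| f_equal; auto |].
  - index_cases.
    + subst n. rewrite lift_subst_hi by lia. f_equal; lia.
    + replace n with (S c) by lia. rewrite subst_lift by lia. reflexivity.
  - f_equal; rewrite IHu by lia; reflexivity.
Qed.

Lemma closed_at_mono t k m : closed_at k t -> k <= m -> closed_at m t.
Proof.
  revert k m; induction t; simpl; intros k m Ht Hkm; try lia.
  - destruct Ht; split; eauto.
  - apply (IHt (S k)); auto; lia.
Qed.

Lemma lift_closed t k j c : closed_at k t -> k <= c -> lift j c t = t.
Proof.
  revert k c; induction t; intros k c Ht Hkc; cbn [lift closed_at] in *; [index_cases | |].
  - destruct Ht; f_equal; eauto.
  - f_equal; apply (IHt (S k)); auto; lia.
Qed.

Lemma subst_closed t k s c : closed_at k t -> k <= c -> subst s c t = t.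
Proof.
  revert k c; induction t; intros k c Ht Hkc; cbn [subst closed_at] in *; [index_cases | |].
  - destruct Ht; f_equal; eauto.
  - f_equal; apply (IHt (S k)); auto; lia.
Qed.

Lemma closed_lift t m j c : closed_at m t -> closed_at (m + j) (lift j c t).
Proof.
  revert m c; induction t; intros m c Ht; cbn [lift closed_at] in *.
  - destruct (Nat.leb_spec c n); simpl; lia.
  - destruct Ht; split; auto.
  - apply (IHt (S m)); auto.
Qed.

Lemma closed_subst t s k c : closed_at (S k) t -> c <= k -> closed_at (k - c) s ->
  closed_at k (subst s c t).
Proof.
  revert k c; induction t; intros k c Ht Hck Hs; cbn [subst closed_at] in *.
  - destruct (Nat.eqb_spec n c).
    + replace k with (k - c + c) by lia. apply closed_lift; auto.
    + destruct (Nat.ltb_spec c n); simpl; lia.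
  - destruct Ht; split; auto.
  - apply IHt; auto; lia.
Qed.

(* [Var 0] is substituted for index c, where it is lifted to [Var c] itself. *)
Lemma subst_var0 t c : closed_at (S c) t -> subst (Var 0) c t = t.
Proof.
  revert c; induction t; intros c Ht; cbn [subst closed_at] in *; [index_cases | |].
  - destruct Ht; f_equal; auto.
  - f_equal; auto.
Qed.

Lemma beta_closed t t' : beta t t' -> forall k, closed_at k t -> closed_at k t'.
Proof.
  induction 1; intros k Ht; simpl in *; [| destruct Ht; split; auto .. | auto].
  destruct Ht. apply closed_subst; auto; [lia | now rewrite Nat.sub_0_r].
Qed.

Lemma red_closed t t' k : beta_red t t' -> closed_at k t -> closed_at k t'.
Proof. induction 1; eauto using beta_closed. Qed.

Lemma closed_apps h l k : closed_at k h -> Forall (closed_at k) l -> closed_at k (apps h l).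
Proof.
  revert h; induction l as [|a l IH]; intros h Hh Hl; simpl; auto.
  inversion Hl; subst. apply IH; simpl; auto.
Qed.

Lemma closed_apps_head h l k : closed_at k (apps h l) -> closed_at k h.
Proof.
  revert h; induction l as [|a l IH]; intros h Hh; simpl in *; auto.
  apply IH in Hh. simpl in Hh. tauto.
Qed.

Lemma subst_apps h l s c : subst s c (apps h l) = apps (subst s c h) (map (subst s c) l).
Proof. revert h; induction l; intros; simpl; auto. Qed.

Lemma apps_snoc h l a : apps h (l ++ [a]) = App (apps h l) a.
Proof. unfold apps. now rewrite fold_left_app. Qed.

(* Parallel reduction and Takahashi's complete development give confluence. *)
Inductive par : term -> term -> Prop :=
| par_var n : par (Var n) (Var n)
| par_app t t' s s' : par t t' -> par s s' -> par (App t s) (App t' s')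
| par_lam t t' : par t t' -> par (Lam t) (Lam t')
| par_beta t t' s s' : par t t' -> par s s' -> par (App (Lam t) s) (subst s' 0 t').

Lemma par_refl t : par t t.
Proof. induction t; constructor; auto. Qed.

Lemma par_lift t t' k c : par t t' -> par (lift k c t) (lift k c t').
Proof.
  intros H; revert k c; induction H; intros; cbn [lift]; try (constructor; auto).
  - apply par_refl.
  - rewrite lift_subst_lo, Nat.sub_0_r by lia. constructor; auto.
Qed.

Lemma par_subst t t' s s' c : par t t' -> par s s' -> par (subst s c t) (subst s' c t').
Proof.
  intros H; revert s s' c; induction H; intros; cbn [subst]; try (constructor; auto).
  - destruct (n =? c); [apply par_lift; auto | apply par_refl].
  - rewrite subst_subst, Nat.sub_0_r by lia. constructor; auto.
Qed.

Fixpoint develop (t : term) : term :=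
  match t with
  | Var n => Var n
  | Lam b => Lam (develop b)
  | App (Lam b) s => subst (develop s) 0 (develop b)
  | App t1 t2 => App (develop t1) (develop t2)
  end.

Lemma par_develop t t' : par t t' -> par t' (develop t).
Proof.
  induction 1; simpl; try (constructor; auto).
  - destruct t; try (constructor; auto).
    inversion H; subst. inversion IHpar1; subst. constructor; auto.
  - apply par_subst; auto.
Qed.

Notation par_star := (clos_refl_trans_1n term par).

Lemma par_strip t u v : par t u -> par_star t v -> exists w, par_star u w /\ par v w.
Proof.
  intros Hu Hv; revert u Hu; induction Hv as [|t t1 v Ht1 _ IH]; intros u Hu.
  - exists u; split; [constructor | auto].
  - destruct (IH (develop t)) as [w [H1 H2]]; [apply par_develop; auto |].
    exists w; split; auto. econstructor; [apply par_develop; eauto | auto].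
Qed.

Lemma par_star_confl t u v : par_star t u -> par_star t v ->
  exists w, par_star u w /\ par_star v w.
Proof.
  intros Hu; revert v; induction Hu as [|t t1 u Ht1 _ IH]; intros v Hv.
  - exists v; split; [auto | constructor].
  - destruct (par_strip _ _ _ Ht1 Hv) as [w [H1 H2]].
    destruct (IH w H1) as [w' [H3 H4]].
    exists w'; split; auto. econstructor; eauto.
Qed.

Lemma red_app t t' s s' : beta_red t t' -> beta_red s s' -> beta_red (App t s) (App t' s').
Proof.
  intros Ht Hs. apply rt_trans with (App t' s).
  - induction Ht; [apply rt_step; constructor; auto | apply rt_refl | eapply rt_trans; eauto].
  - induction Hs; [apply rt_step; constructor; auto | apply rt_refl | eapply rt_trans; eauto].
Qed.

Lemma red_lam t t' : beta_red t t' -> beta_red (Lam t) (Lam t').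
Proof.
  induction 1; [apply rt_step; constructor; auto | apply rt_refl | eapply rt_trans; eauto].
Qed.

Lemma par_red t t' : par t t' -> beta_red t t'.
Proof.
  induction 1; [apply rt_refl | apply red_app | apply red_lam |]; auto.
  eapply rt_trans; [apply red_app; [apply red_lam |]; eauto | apply rt_step; constructor].
Qed.

Lemma red_par_star t u : beta_red t u <-> par_star t u.
Proof.
  split.
  - intros H; apply clos_rt_rt1n_iff; induction H; eauto using rt_trans, rt_refl.
    apply rt_step; induction H; constructor; auto using par_refl.
  - induction 1; [apply rt_refl | eapply rt_trans; [apply par_red |]; eauto].
Qed.

Lemma red_confl t u v : beta_red t u -> beta_red t v ->
  exists w, beta_red u w /\ beta_red v w.
Proof.
  rewrite !red_par_star; intros Hu Hv.
  destruct (par_star_confl _ _ _ Hu Hv) as [w [? ?]].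
  exists w; rewrite !red_par_star; auto.
Qed.

Lemma conv_common_reduct t u : beta_conv t u -> exists w, beta_red t w /\ beta_red u w.
Proof.
  induction 1 as [t u H | t | t u _ [w [? ?]] | t u v _ [w1 [? ?]] _ [w2 [? ?]]].
  - exists u; split; [apply rt_step; auto | apply rt_refl].
  - exists t; split; apply rt_refl.
  - exists w; auto.
  - destruct (red_confl u w1 w2) as [w [? ?]]; auto.
    exists w; split; eapply rt_trans; eauto.
Qed.

Lemma red_conv t u : beta_red t u -> beta_conv t u.
Proof. induction 1; [apply rst_step | apply rst_refl | eapply rst_trans]; eauto. Qed.

Lemma conv_app t t' s s' : beta_conv t t' -> beta_conv s s' -> beta_conv (App t s) (App t' s').
Proof.
  intros Ht Hs. apply rst_trans with (App t' s).
  - induction Ht; [apply rst_step; constructor | apply rst_refl | apply rst_sym | eapply rst_trans];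
      eauto.
  - induction Hs; [apply rst_step; constructor | apply rst_refl | apply rst_sym | eapply rst_trans];
      eauto.
Qed.

Lemma conv_lam t t' : beta_conv t t' -> beta_conv (Lam t) (Lam t').
Proof.
  induction 1; [apply rst_step; constructor | apply rst_refl | apply rst_sym | eapply rst_trans];
    eauto.
Qed.

Lemma apps_var_neq_lam j l t : apps (Var j) l <> Lam t.
Proof. induction l as [|a l _] using rev_ind; [discriminate | rewrite apps_snoc; discriminate]. Qed.

Lemma apps_var_eq_app j l M a : apps (Var j) l = App M a ->
  exists l', l = l' ++ [a] /\ M = apps (Var j) l'.
Proof.
  induction l as [|b l _] using rev_ind; intros H; [discriminate |].
  rewrite apps_snoc in H. injection H as <- ->. eauto.
Qed.

Lemma Forall2_red_refl l : Forall2 beta_red l l.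
Proof. induction l; constructor; [apply rt_refl | auto]. Qed.

Lemma beta_apps_var j Ms P : beta (apps (Var j) Ms) P ->
  exists Ms', P = apps (Var j) Ms' /\ Forall2 beta_red Ms Ms'.
Proof.
  revert P; induction Ms as [|a Ms IH] using rev_ind; intros P H; [inversion H |].
  rewrite apps_snoc in H. inversion H; subst.
  - exfalso; eapply apps_var_neq_lam; eauto.
  - destruct (IH _ H3) as [Ms' [-> HF]]. exists (Ms' ++ [a]).
    rewrite apps_snoc; split; auto.
    apply Forall2_app; [exact HF | constructor; [apply rt_refl | constructor]].
  - exists (Ms ++ [s']). rewrite apps_snoc; split; auto.
    apply Forall2_app; [| constructor; [apply rt_step; auto | constructor]].
    apply Forall2_red_refl.
Qed.

Lemma red_apps_var j Ms P : beta_red (apps (Var j) Ms) P ->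
  exists Ms', P = apps (Var j) Ms' /\ Forall2 beta_red Ms Ms'.
Proof.
  intros H; apply clos_rt_rt1n_iff in H. remember (apps (Var j) Ms) as A eqn:HA.
  revert Ms HA; induction H as [|A B P HAB _ IH]; intros Ms ->.
  - exists Ms; split; auto using Forall2_red_refl.
  - destruct (beta_apps_var _ _ _ HAB) as [Ms1 [-> HF1]].
    destruct (IH Ms1 eq_refl) as [Ms2 [-> HF2]].
    exists Ms2; split; auto. clear -HF1 HF2. revert Ms2 HF2.
    induction HF1; intros Ms2 HF2; inversion HF2; subst; constructor; [eapply rt_trans | ]; eauto.
Qed.

Lemma red_lam_inv t u : beta_red (Lam t) u -> exists t', u = Lam t' /\ beta_red t t'.
Proof.
  intros H; apply clos_rt_rt1n_iff in H. remember (Lam t) as A eqn:HA.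
  revert t HA; induction H as [|A B P HAB _ IH]; intros t ->.
  - exists t; split; [reflexivity | apply rt_refl].
  - inversion HAB; subst. destruct (IH t' eq_refl) as [t'' [-> ?]].
    exists t''; split; [reflexivity | eapply rt_trans; [apply rt_step |]; eauto].
Qed.

Lemma red_hnf n j Ms P : beta_red (lams n (apps (Var j) Ms)) P ->
  exists Ms', P = lams n (apps (Var j) Ms') /\ Forall2 beta_red Ms Ms'.
Proof.
  revert P; induction n; intros P H; simpl in *; [apply red_apps_var; auto |].
  destruct (red_lam_inv _ _ H) as [t' [-> H1]].
  destruct (IHn _ H1) as [Ms' [-> ?]]. eauto.
Qed.

Lemma conv_hnf M N n j Ms : beta_conv M N -> beta_red M (lams n (apps (Var j) Ms)) ->
  exists Ns, beta_red N (lams n (apps (Var j) Ns)) /\ Forall2 beta_conv Ms Ns.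
Proof.
  intros HMN HM. destruct (conv_common_reduct _ _ HMN) as [P [HMP HNP]].
  destruct (red_confl _ _ _ HM HMP) as [Q [H1 H2]].
  destruct (red_hnf _ _ _ _ H1) as [Ns [-> HF]].
  exists Ns; split; [eapply rt_trans; eauto |].
  exact (Forall2_impl _ red_conv HF).
Qed.

Lemma has_hnf_conv M N : beta_conv M N -> has_hnf M -> has_hnf N.
Proof.
  intros H [n [j [Ms HM]]]. destruct (conv_hnf _ _ _ _ _ H HM) as [Ns [HN _]].
  exists n, j, Ns; exact HN.
Qed.

Lemma Forall2_nth' (R : term -> term -> Prop) l l' i d :
  Forall2 R l l' -> i < length l -> R (nth i l d) (nth i l' d).
Proof.
  intros H; revert i; induction H; intros i Hi; simpl in *; [lia |].
  destruct i; auto. apply IHForall2; lia.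
Qed.

Lemma bt_eq_refl M : bt_eq M M.
Proof.
  revert M; cofix CIH; intros M.
  destruct (classic (has_hnf M)) as [[n [j [Ms HM]]] | Hn].
  - apply (bt_hnf M M n j Ms Ms HM HM eq_refl); auto.
  - apply bt_unsolv; auto.
Qed.

Lemma conv_bt_eq_trans M M' N : beta_conv M M' -> bt_eq M' N -> bt_eq M N.
Proof.
  revert M M' N; cofix CIH; intros M M' N HMM' H.
  destruct H as [M' N HM' HN | M' N n j Ms' Ns HM' HN Hlen Hargs].
  - apply bt_unsolv; auto. intros HM; apply HM'. eapply has_hnf_conv; eauto.
  - destruct (conv_hnf M' M n j Ms' (rst_sym _ _ _ _ HMM') HM') as [Ms [HM HF]].
    apply (bt_hnf M N n j Ms Ns HM HN).
    + rewrite <- (Forall2_length HF); auto.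
    + intros i Hi. rewrite <- (Forall2_length HF) in Hi.
      apply CIH with (nth i Ms' (Var 0)); [apply rst_sym, Forall2_nth'; auto | auto].
Qed.

Lemma conv_bt M N : beta_conv M N -> bt_eq M N.
Proof. intros H; eapply conv_bt_eq_trans; [exact H | apply bt_eq_refl]. Qed.

(* A head normal form reached from [M (Var 0)] is reached either inside [M] or after
   contracting [M'' (Var 0)] with [M ->> Lam M'']; in the latter case [Lam M''] reduces to its
   abstraction. *)
Lemma has_hnf_app_var0 A P : clos_refl_trans_1n term beta A P ->
  forall M, A = App M (Var 0) -> closed M ->
  forall n j args, P = lams n (apps (Var j) args) -> has_hnf M.
Proof.
  induction 1 as [A | A B P Hs Hr IH]; intros M HA HM n j args HP; subst.
  - destruct n; simpl in HP; [| discriminate].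
    symmetry in HP. destruct (apps_var_eq_app _ _ _ _ HP) as [l' [_ ->]].
    exists 0, j, l'. apply rt_refl.
  - inversion Hs; subst.
    + rewrite subst_var0 in Hr by exact HM.
      exists (S n), j, args. simpl. apply red_lam, clos_rt_rt1n_iff; auto.
    + destruct (IH t' eq_refl) with (n := n) (j := j) (args := args) as [n' [j' [a' Hr']]];
        [eapply beta_closed; eauto | reflexivity |].
      exists n', j', a'. eapply rt_trans; [apply rt_step |]; eauto.
    + match goal with H : beta (Var 0) _ |- _ => inversion H end.
Qed.

Lemma has_hnf_eta_closed M : closed M -> has_hnf (Lam (App M (Var 0))) -> has_hnf M.
Proof.
  intros HM [n [j [args H]]]. destruct (red_lam_inv _ _ H) as [t' [Ht Hr]].
  destruct n as [|n]; simpl in Ht; [exfalso; eapply apps_var_neq_lam; eauto |].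
  injection Ht as <-. apply clos_rt_rt1n_iff in Hr. eapply has_hnf_app_var0; eauto.
Qed.

Lemma bt_eq_eta_closed M : closed M -> bt_eq (Lam (App M (Var 0))) M.
Proof.
  intros HM. destruct (classic (has_hnf M)) as [[n [j [args Hr]]] | Hn].
  - assert (Hc : closed_at 0 (lams n (apps (Var j) args))) by (eapply red_closed; eauto).
    destruct n as [|n]; [simpl in Hc; apply closed_apps_head in Hc; simpl in Hc; lia |].
    simpl in Hc. apply conv_bt.
    apply rst_trans with (lams (S n) (apps (Var j) args)); [| apply rst_sym, red_conv; auto].
    apply red_conv, red_lam. eapply rt_trans; [apply red_app; [exact Hr | apply rt_refl] |].
    eapply rt_trans; [apply rt_step, beta_redex | rewrite subst_var0 by exact Hc; apply rt_refl].
  - apply bt_unsolv; auto. intros H; apply Hn, has_hnf_eta_closed; auto.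
Qed.

Definition K : term := Lam (Lam (Var 1)).
Definition F : term := Lam (Lam (Var 0)).
Definition Tail : term := Lam (App (Var 0) F).
Definition stream_nth (N S : term) : term := App (App (App N Tail) S) K.

Lemma beta_red_K M S : beta_red (App (App K M) S) M.
Proof.
  eapply rt_trans; [apply red_app; [apply rt_step, beta_redex | apply rt_refl] |].
  simpl. eapply rt_trans; [apply rt_step, beta_redex |].
  rewrite (subst_lift M S 0 0 0), lift_0 by lia. apply rt_refl.
Qed.

Lemma beta_red_F M S : beta_red (App (App F M) S) S.
Proof.
  eapply rt_trans; [apply red_app; [apply rt_step, beta_redex | apply rt_refl] |].
  simpl. rewrite <- (lift_0 S 0) at 2. apply rt_step, beta_redex.
Qed.

Lemma beta_red_pair M S f : beta_red (App (pair_t M S) f) (App (App f M) S).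
Proof.
  eapply rt_trans; [apply rt_step, beta_redex |].
  cbn [subst]. simpl. rewrite lift_0, !(subst_lift _ f 0 0 0), !lift_0 by lia. apply rt_refl.
Qed.

Lemma closed_church n : closed (church n).
Proof. unfold closed, church; simpl. induction n; simpl; auto. Qed.

Lemma closed_Omega : closed Omega.
Proof. unfold closed, Omega, omega_small; simpl; lia. Qed.

Lemma church_subst_f n f :
  subst f 1 (Nat.iter n (fun t => App (Var 1) t) (Var 0)) = Nat.iter n (App (lift 1 0 f)) (Var 0).
Proof. induction n; simpl; congruence. Qed.

Lemma iter_lift_subst n f a :
  subst a 0 (Nat.iter n (App (lift 1 0 f)) (Var 0)) = Nat.iter n (App f) a.
Proof.
  induction n; simpl; [apply lift_0 |].
  rewrite IHn, (subst_lift f a 0 0 0), lift_0 by lia. reflexivity.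
Qed.

Lemma beta_red_church n f a : beta_red (App (App (church n) f) a) (Nat.iter n (App f) a).
Proof.
  eapply rt_trans; [apply red_app; [apply rt_step, beta_redex | apply rt_refl] |].
  unfold church; cbn [subst]. rewrite church_subst_f.
  eapply rt_trans; [apply rt_step, beta_redex | rewrite iter_lift_subst; apply rt_refl].
Qed.

Lemma stream_tail_conv (M s : nat -> term) :
  (forall k, beta_conv (s k) (pair_t (M k) (s (S k)))) ->
  forall k, beta_conv (Nat.iter k (App Tail) (s 0)) (s k).
Proof.
  intros Hs k; induction k as [|k IH]; simpl; [apply rst_refl |].
  eapply rst_trans; [apply red_conv, rt_step, beta_redex |]. simpl. rewrite lift_0.
  eapply rst_trans; [apply conv_app; [eapply rst_trans; [exact IH | apply Hs] | apply rst_refl] |].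
  eapply rst_trans; [apply red_conv, beta_red_pair | apply red_conv, beta_red_F].
Qed.

Lemma stream_nth_conv M S n : is_stream M S -> beta_conv (stream_nth (church n) S) (M n).
Proof.
  intros [s [<- Hs]]. unfold stream_nth.
  eapply rst_trans; [apply conv_app; [apply red_conv, beta_red_church | apply rst_refl] |].
  eapply rst_trans; [apply conv_app; [eapply rst_trans; [eapply stream_tail_conv; eauto | apply Hs]
                                     | apply rst_refl] |].
  eapply rst_trans; [apply red_conv, beta_red_pair | apply red_conv, beta_red_K].
Qed.

Lemma red_apps_head h h' l : beta_red h h' -> beta_red (apps h l) (apps h' l).
Proof.
  revert h h'; induction l; intros; simpl; auto.
  apply IHl, red_app; [auto | apply rt_refl].
Qed.

Lemma beta_red_K_iter l A rest :
  beta_red (apps (Nat.iter (length l) (App K) A) (l ++ rest)) (apps A rest).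
Proof.
  induction l as [|a l IH]; simpl; [apply rt_refl |].
  eapply rt_trans; [apply red_apps_head, beta_red_K | apply IH].
Qed.

(* [Eq = λ n X z. (λ x y. stream_nth n (X y x)) z (n K I)]. The inner redex keeps [X y x]
   literally equal to [App (App X vy) vx] under two binders, so the stream hypothesis applies. *)
Definition Eq : term :=
  Lam (Lam (Lam (App (App (Lam (Lam (stream_nth (Var 4) (App (App (Var 3) vy) vx)))) (Var 0))
                      (App (App (Var 2) K) I)))).

Definition Eq_body (N X : term) : term :=
  Lam (App (App (Lam (Lam (stream_nth N (App (App X vy) vx)))) (Var 0)) (App (App N K) I)).

Lemma closed_Eq : closed Eq.
Proof. unfold closed, Eq, stream_nth, Tail, K, F, I, vx, vy; simpl; repeat split; lia. Qed.

Lemma beta_red_Eq N X : closed N -> closed X -> beta_red (App (App Eq N) X) (Eq_body N X).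
Proof.
  intros HN HX.
  eapply rt_trans; [apply red_app; [apply rt_step, beta_redex | apply rt_refl] |].
  eapply rt_trans; [apply rt_step, beta_redex |].
  unfold Eq, Eq_body, stream_nth, K, Tail, F, I, vx, vy.
  cbn [subst lift Nat.eqb Nat.ltb Nat.leb Nat.sub].
  rewrite (lift_closed N 0 4 0), (lift_closed N 0 2 0), (lift_closed X 0 3 0),
    (subst_closed N 0 X 3), (subst_closed N 0 X 1) by (auto; lia).
  apply rt_refl.
Qed.

Lemma beta_red_select l a : Forall closed l -> closed_at 2 a ->
  beta_red (Lam (App (App (Lam (Lam (apps vy (l ++ [a])))) (Var 0))
                     (App (App (church (length l)) K) I)))
           (Lam (subst (App (App (church (length l)) K) I) 0 a)).
Proof.
  intros Hl Ha. apply red_lam.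
  assert (Hc : closed_at 2 (apps vy (l ++ [a]))).
  { apply closed_apps; [simpl; lia |]. apply Forall_app; split; auto.
    eapply Forall_impl; [| exact Hl]. intros t Ht; eapply closed_at_mono; [exact Ht | lia]. }
  eapply rt_trans; [apply red_app; [apply rt_step, beta_redex | apply rt_refl] |].
  cbn [subst]. rewrite subst_var0 by exact Hc.
  eapply rt_trans; [apply rt_step, beta_redex |].
  rewrite subst_apps, map_app. unfold vy. cbn [subst map Nat.eqb]. rewrite lift_0.
  rewrite (map_ext_in _ (fun t => t) l), map_id
    by (intros t Ht; eapply subst_closed; [eapply Forall_forall; eauto | lia]).
  eapply rt_trans; [apply red_apps_head, beta_red_church |].
  eapply rt_trans; [apply beta_red_K_iter |].
  simpl. eapply rt_trans; [apply rt_step, beta_redex | simpl; rewrite lift_0; apply rt_refl].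
Qed.

Lemma Eq_stream_conv X (a : nat -> term) n : closed X ->
  is_stream (fun k => apps vy (repeat Omega k ++ [a k])) (App (App X vy) vx) ->
  closed_at 2 (a n) ->
  beta_conv (App (App Eq (church n)) X) (Lam (subst (App (App (church n) K) I) 0 (a n))).
Proof.
  intros HX Hs Ha.
  eapply rst_trans; [apply red_conv, beta_red_Eq; [apply closed_church | auto] |].
  eapply rst_trans.
  { apply conv_lam, conv_app; [apply conv_app; [| apply rst_refl] | apply rst_refl].
    apply conv_lam, conv_lam, (stream_nth_conv _ _ n Hs). }
  assert (HOm : Forall closed (repeat Omega n))
    by (apply Forall_forall; intros t Ht; apply repeat_spec in Ht; subst t; exact closed_Omega).
  pose proof (beta_red_select _ _ HOm Ha) as Hsel. rewrite repeat_length in Hsel.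
  apply red_conv, Hsel.
Qed.

Theorem mainTheorem13 :
  forall (eta : nat -> term) (IOm etaOm : term),
    (forall i, closed (eta i)) ->
    (forall i, betaeta_red (eta i) I) ->
    effective eta ->
    closed IOm ->
    is_stream (fun n => apps vy (repeat Omega n ++ [vx])) (App (App IOm vy) vx) ->
    closed etaOm ->
    is_stream (fun n => apps vy (repeat Omega n ++ [App (eta n) vx]))
              (App (App etaOm vy) vx) ->
    exists Eq : term, closed Eq /\
      forall n : nat,
        bt_eq (App (App Eq (church n)) IOm) I /\
        bt_eq (App (App Eq (church n)) etaOm) (eta n).
Proof.
  intros eta IOm etaOm Heta _ _ HIOm HIs HetaOm Hes.
  exists Eq; split; [exact closed_Eq |]. intros n; split.
  - apply conv_bt, (Eq_stream_conv IOm (fun _ => vx) n HIOm HIs).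
    unfold vx; simpl; lia.
  - apply conv_bt_eq_trans with (Lam (App (eta n) (Var 0))); [| apply bt_eq_eta_closed; auto].
    assert (Hcl : closed_at 2 (App (eta n) vx))
      by (split; [eapply closed_at_mono; [apply Heta | lia] | unfold vx; simpl; lia]).
    pose proof (Eq_stream_conv etaOm (fun k => App (eta k) vx) n HetaOm Hes Hcl) as Hconv.
    unfold vx in Hconv; cbn [subst Nat.eqb Nat.ltb Nat.sub] in Hconv.
    rewrite (subst_closed (eta n) 0) in Hconv by (try apply Heta; lia). exact Hconv.
Qed.
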